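(* Let $G^\sigma$ be a connected oriented unicyclic graph of even order $n$ with cycle $C_k^\sigma$. Then $S(G^\sigma)$ is nonsingular if and only if either $G^\sigma\in\mathscr{U}_1$ and $G^\sigma$ has a perfect matching, or $G^\sigma\in\mathscr{U}_2$, $C_k^\sigma$ is oddly-oriented and $G^\sigma-C_k^\sigma$ has a perfect matching.
   Context: An oriented graph $G^\sigma$ is a simple graph with an orientation of each edge. Its skew-adjacency matrix $S(G^\sigma)=(s_{ij})$ has $s_{ij}=1$ if there is an arc from $v_i$ to $v_j$, $s_{ij}=-1$ if there is an arc from $v_j$ to $v_i$, and $0$ otherwise. For an even cycle $u_1\cdots u_ku_1$, its sign is the sign of $\prod_{i=1}^k s_{u_iu_{i+1}}$ ($u_{k+1}=u_1$); it is oddly-oriented if this sign is negative. A $\delta$-transformation deletes a pendant vertex (degree one) together with its unique neighbor and all incident edges. With $k$ the girth, $\mathscr{U}_1$ is the set of oriented unicyclic graphs of order $n$ with girth $k$ that can be transformed into a graph without edges by finitely many $\delta$-transformations; $\mathscr{U}_2$ is the set of those that can be transformed into $C_k^\sigma$ or the disjoint union of $C_k^\sigma$ with isolated vertices by finitely many $\delta$-transformations. $G^\sigma-C_k^\sigma$ is obtained by deleting the cycle's vertices and incident edges. *)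

From mathcomp Require Import all_boot all_order all_algebra.
Set Implicit Arguments. Unset Strict Implicit. Unset Printing Implicit Defensive.
Import GRing.Theory Num.Theory.

Definition oriented_graph (n : nat) (arc : rel 'I_n) : Prop :=
  (forall x, ~~ arc x x) /\ (forall x y, arc x y -> ~~ arc y x).

Definition adj (n : nat) (arc : rel 'I_n) : rel 'I_n :=
  fun x y => arc x y || arc y x.

Definition skew_adj (n : nat) (arc : rel 'I_n) : 'M[rat]_n :=
  \matrix_(i, j) ((arc i j)%:R - (arc j i)%:R)%R.

Definition connected_graph (n : nat) (arc : rel 'I_n) : Prop :=
  forall x y : 'I_n, connect (adj arc) x y.

Definition edge_set (n : nat) (arc : rel 'I_n) : {set {set 'I_n}} :=
  [set e : {set 'I_n} | [exists x, exists y, (e == [set x; y]) && adj arc x y]].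

Definition unicyclic (n : nat) (arc : rel 'I_n) : Prop :=
  connected_graph arc /\ #|edge_set arc| = n.

Definition is_cycle (n : nat) (arc : rel 'I_n) (c : seq 'I_n) : Prop :=
  [/\ uniq c, 3 <= size c & cycle (adj arc) c].

Definition cycle_edge (n : nat) (c : seq 'I_n) (x y : 'I_n) : bool :=
  [&& x \in c, y \in c & (y == next c x) || (x == next c y)].

Definition oddly_oriented (n : nat) (arc : rel 'I_n) (c : seq 'I_n) : Prop :=
  ~~ odd (size c) /\ (\prod_(x <- c) skew_adj arc x (next c x) < 0)%R.

(* delta-transformation on the induced subgraph with vertex set A *)
Definition delta_step (n : nat) (arc : rel 'I_n) (A B : {set 'I_n}) : Prop :=
  exists v u : 'I_n,
    [/\ v \in A, u \in A, adj arc v u,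
        (forall w, w \in A -> adj arc v w -> w = u) &
        B = A :\ v :\ u].

Inductive delta_reach (n : nat) (arc : rel 'I_n) : {set 'I_n} -> {set 'I_n} -> Prop :=
  | delta_refl A : delta_reach arc A A
  | delta_next A B C : delta_step arc A B -> delta_reach arc B C -> delta_reach arc A C.

Definition no_edges (n : nat) (arc : rel 'I_n) (A : {set 'I_n}) : Prop :=
  forall x y, x \in A -> y \in A -> ~~ adj arc x y.

Definition in_U1 (n : nat) (arc : rel 'I_n) : Prop :=
  exists B, delta_reach arc [set: 'I_n] B /\ no_edges arc B.

(* U_2: can be transformed into C_k or C_k together with isolated vertices *)
Definition in_U2 (n : nat) (arc : rel 'I_n) (c : seq 'I_n) : Prop :=
  exists B, delta_reach arc [set: 'I_n] B /\
    {subset c <= B} /\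
    (forall x y, x \in B -> y \in B -> adj arc x y = cycle_edge c x y).

Definition has_perfect_matching (n : nat) (arc : rel 'I_n) (A : {set 'I_n}) : Prop :=
  exists M : {set {set 'I_n}},
    (forall e, e \in M -> exists x y, [/\ e = [set x; y], x \in A, y \in A & adj arc x y]) /\
    (forall x, x \in A -> exists! e, e \in M /\ x \in e).

From mathcomp Require Import all_boot all_order all_algebra.
From mathcomp Require fingroup perm.
Import GRing.Theory Num.Theory.

(* A delta-transformation removing a pendant vertex v and its neighbour u
   preserves the determinant of the skew-adjacency matrix (expand along row and
   column v; the factor s_uv s_vu = -1 cancels the sign of the transposition)
   and the existence of a perfect matching (v must be matched with u).  So we
   may pass to a vertex set B on which no delta-transformation applies.  If the
   determinant is nonzero, no vertex of B is isolated, hence every vertex has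
   two neighbours in B; since every edge of a unicyclic graph either lies on
   the cycle or joins a vertex to its parent towards the cycle, B is then the
   cycle itself.  Its skew-adjacency matrix is singular when the cycle is odd
   (skew-symmetry), and for an even cycle a kernel vector satisfies
   x_(i+2) = s_i s_(i+1) x_i, which after one turn gives x = (prod s) x:
   the matrix is nonsingular exactly when the cycle is oddly oriented. *)

Set Implicit Arguments.
Unset Strict Implicit.
Unset Printing Implicit Defensive.

Local Open Scope ring_scope.

Section SkewAdjacency.
Import fingroup perm.
Variables (n : nat) (arc : rel 'I_n).

Lemma adj_sym : symmetric (adj arc).
Proof. by move=> x y; rewrite /adj orbC. Qed.

Lemma skew_adjE x y : skew_adj arc x y = (arc x y)%:R - (arc y x)%:R.
Proof. by rewrite mxE. Qed.

Lemma skew_adjN x y : skew_adj arc y x = - skew_adj arc x y.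
Proof. by rewrite !skew_adjE opprB. Qed.

Lemma skew_adj0 x y : ~~ adj arc x y -> skew_adj arc x y = 0.
Proof. by rewrite negb_or skew_adjE => /andP[/negbTE-> /negbTE->]; rewrite subrr. Qed.

(* The skew-adjacency matrix of the subgraph induced on A, padded with the
   identity outside A so that it stays in 'M_n. *)
Definition skew_adj_on (A : {set 'I_n}) : 'M[rat]_n :=
  \matrix_(i, j) if (i \in A) && (j \in A) then skew_adj arc i j else (i == j)%:R.

Lemma skew_adj_onE (A : {set 'I_n}) i j :
  skew_adj_on A i j = if (i \in A) && (j \in A) then skew_adj arc i j else (i == j)%:R.
Proof. by rewrite mxE. Qed.

Lemma skew_adj_onT : skew_adj_on setT = skew_adj arc.
Proof. by apply/matrixP=> i j; rewrite skew_adj_onE !in_setT. Qed.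

Lemma skew_adj_on0 : skew_adj_on set0 = 1%:M.
Proof. by apply/matrixP=> i j; rewrite !mxE !in_set0. Qed.

Lemma det_skew_adj_on_isolated (A : {set 'I_n}) x :
  x \in A -> (forall y, y \in A -> ~~ adj arc x y) -> \det (skew_adj_on A) = 0.
Proof.
move=> xA x_isolated; rewrite /determinant big1 // => s _.
rewrite (bigD1 x) //= skew_adj_onE xA /=.
case sxA: (s x \in A) => /=; first by rewrite skew_adj0 ?x_isolated // mul0r mulr0.
by case: eqP => [sxx|_]; [rewrite -sxx xA in sxA | rewrite mul0r mulr0].
Qed.

(* Conjugating by the diagonal sign matrix J of A turns skew_adj_on A into its
   transpose, so det = (det J) det = (-1)^#|A| det. *)
Lemma det_skew_adj_on_odd (A : {set 'I_n}) : odd #|A| -> \det (skew_adj_on A) = 0.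
Proof.
move=> oddA.
pose J : 'M[rat]_n := diag_mx (\row_i (if i \in A then -1 else 1)).
have trE : (skew_adj_on A)^T = J *m skew_adj_on A.
  apply/matrixP=> i j; rewrite mul_diag_mx !mxE.
  case iA: (i \in A); case jA: (j \in A) => /=;
    rewrite ?mulN1r ?mul1r ?opprB ?[j == i]eq_sym //.
  by case: eqP iA jA => [->->//|]; rewrite oppr0.
have detJ : \det J = -1.
  rewrite det_diag (eq_bigr (fun i => if i \in A then -1 else 1)) => [|i _]; last by rewrite mxE.
  by rewrite -big_mkcond prodr_const -signr_odd oddA expr1.
move/eqP: (congr1 determinant trE).
by rewrite det_tr det_mulmx detJ mulN1r eq_sym eqNr => /eqP.
Qed.

Hypothesis arc_oriented : oriented_graph arc.

Lemma adj_irrefl x : ~~ adj arc x x.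
Proof. by rewrite /adj orbb; case: arc_oriented. Qed.

Lemma skew_adj_sqr x y : adj arc x y -> skew_adj arc x y * skew_adj arc x y = 1.
Proof.
case: arc_oriented => _ asym; rewrite skew_adjE /adj.
case xy: (arc x y) => /=; first by rewrite (negbTE (asym _ _ xy)) subr0 mulr1.
by move=> ->; rewrite sub0r mulrNN mulr1.
Qed.

(* Row v and column v of skew_adj_on A have a single nonzero entry, in column
   (row) u; composing permutations with the transposition (u v) splits off the
   factor s_uv s_vu = -1, which cancels the sign change of the permutation. *)
Lemma det_skew_adj_on_pendant (A : {set 'I_n}) v u :
  v \in A -> u \in A -> adj arc v u -> (forall w, w \in A -> adj arc v w -> w = u) ->
  \det (skew_adj_on A) = \det (skew_adj_on (A :\ v :\ u)).
Proof.
move=> vA uA vu v_pendant.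
have uv : u != v by apply: contraTneq vu => ->; apply: adj_irrefl.
have row_v j : j != u -> skew_adj_on A v j = 0.
  move=> ju; rewrite skew_adj_onE vA /=; case jA: (j \in A) => /=.
    by rewrite skew_adj0 //; apply: contra ju => /(v_pendant _ jA)->.
  by case: eqP => // vj; rewrite -vj vA in jA.
have col_v i : i != u -> skew_adj_on A i v = 0.
  move=> iu; rewrite skew_adj_onE vA andbT; case iA: (i \in A) => /=.
    by rewrite skew_adjN skew_adj0 ?oppr0 //; apply: contra iu => /(v_pendant _ iA)->.
  by case: eqP => // iv; rewrite iv vA in iA.
set t := tperm u v.
rewrite /determinant (reindex_inj (mulgI t)) /=; apply: eq_bigr => s _.
rewrite odd_permM odd_tperm uv /=.
have tsE i : (t * s)%g i = s (t i) by rewrite permM.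
case su: (s u == u); last first.
  rewrite [X in _ = _ * X](bigD1 u) //= skew_adj_onE !in_setD1 eqxx /= [u == _]eq_sym su.
  by rewrite mul0r !mulr0 (bigD1 v) //= tsE /t tpermR row_v ?mul0r ?mulr0 ?su.
case sv: (s v == v); last first.
  rewrite [X in _ = _ * X](bigD1 v) //= skew_adj_onE !in_setD1 eqxx andbF /= [v == _]eq_sym sv.
  rewrite mul0r !mulr0 (bigD1 (t (s^-1 v)%g)) //= tsE tpermK permKV col_v ?mul0r ?mulr0 //.
  apply: (contraFneq _ sv) => tsv.
  have svv : (s^-1 v)%g = v by rewrite -(tpermK u v (s^-1 v)%g) tsv /t tpermL.
  by rewrite -{1}svv permKV.
move/eqP: su => su; move/eqP: sv => sv.
rewrite (bigD1 u) // [X in _ = _ * X](bigD1 u) //= (bigD1 v) 1?eq_sym //=.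
rewrite [X in _ = _ * (_ * X)](bigD1 v) 1?eq_sym //=.
rewrite !tsE /t tpermL tpermR sv su !skew_adj_onE uA vA /= !in_setD1 !eqxx /= !andbF /= !mul1r.
rewrite mulrA (skew_adjN u v) mulrN skew_adj_sqr; last by rewrite adj_sym.
rewrite mulN1r mulrN signrN mulNr opprK; congr (_ * _); apply: eq_bigr => i /andP[iu iv].
rewrite permM tpermD 1?eq_sym // !skew_adj_onE !in_setD1 iu iv /=.
have siu : s i != u by apply: contra iu => /eqP siu; rewrite -su in siu; rewrite (perm_inj siu).
have siv : s i != v by apply: contra iv => /eqP siv; rewrite -sv in siv; rewrite (perm_inj siv).
by rewrite siu siv.
Qed.

End SkewAdjacency.

Section DeltaTransformation.
Variables (n : nat) (arc : rel 'I_n).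
Hypothesis arc_oriented : oriented_graph arc.

Definition pendant_edge (A : {set 'I_n}) (v u : 'I_n) : bool :=
  [&& v \in A, u \in A, adj arc v u & [forall w in A, adj arc v w ==> (w == u)]].

Lemma delta_step_pendant A v u : pendant_edge A v u -> delta_step arc A (A :\ v :\ u).
Proof.
case/and4P=> vA uA vu /forall_inP v_pendant; exists v, u; split=> // w wA vw.
exact/eqP/(implyP (v_pendant w wA)).
Qed.

Lemma delta_reach_subset A B : delta_reach arc A B -> B \subset A.
Proof.
elim=> [A'|A' B' C' [v [u [_ _ _ _ ->]]] _ sCB]; first exact: subxx.
by apply: (subset_trans sCB); apply: subset_trans (subsetDl _ _) (subsetDl _ _).
Qed.

Lemma det_delta_reach A B :
  delta_reach arc A B -> \det (skew_adj_on arc A) = \det (skew_adj_on arc B).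
Proof.
elim=> // A' B' C' [v [u [vA uA vu v_pendant ->]]] _ <-.
exact: det_skew_adj_on_pendant.
Qed.

Definition delta_terminal (B : {set 'I_n}) := ~~ [exists v, exists u, pendant_edge B v u].

Lemma delta_reach_terminal A : exists2 B, delta_reach arc A B & delta_terminal B.
Proof.
have [k] := ubnP #|A|; elim: k A => // k IH A ltAk.
case: (boolP [exists v, exists u, pendant_edge A v u]) => [|terminal]; last first.
  by exists A => //; apply: delta_refl.
case/existsP=> v /existsP[u vu]; have [vA _ _ _] := and4P vu.
have [|B reachB terminal] := IH (A :\ v :\ u).
  rewrite -ltnS; apply: leq_trans ltAk; rewrite (cardsD1 v A) vA !ltnS.
  exact/subset_leq_card/subsetDl.
by exists B => //; apply: delta_next (delta_step_pendant vu) reachB.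
Qed.

Lemma perfect_matching0 : has_perfect_matching arc set0.
Proof. by exists set0; split=> [e|x]; rewrite inE. Qed.

Lemma perfect_matching_no_edges A :
  no_edges arc A -> has_perfect_matching arc A -> A = set0.
Proof.
move=> noE [M [M_edges M_cover]]; apply/setP=> x; rewrite inE; apply/negbTE/negP=> xA.
have [e [[eM _] _]] := M_cover x xA; have [a [b [_ aA bA ab]]] := M_edges e eM.
by move: (noE a b aA bA); rewrite ab.
Qed.

Lemma perfect_matchingU2 Y v u :
  has_perfect_matching arc Y -> v \notin Y -> u \notin Y -> adj arc v u ->
  has_perfect_matching arc (v |: (u |: Y)).
Proof.
move=> [M [M_edges M_cover]] vY uY vu.
have uv : v != u by apply: contraTneq vu => ->; apply: adj_irrefl.
have M_in e x : e \in M -> x \in e -> x \in Y.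
  by case/M_edges=> a [b [-> aY bY _]] /set2P[]->.
exists ([set v; u] |: M); split.
  move=> e; rewrite in_setU1 => /orP[/eqP->|eM].
    by exists v, u; rewrite !inE !eqxx orbT.
  have [x [y [-> xY yY xy]]] := M_edges e eM.
  by exists x, y; rewrite !inE xY yY !orbT.
move=> x; rewrite !inE => /orP[/eqP->|/orP[/eqP->|xY]].
- exists [set v; u]; split; first by rewrite !setU11.
  move=> e []; rewrite in_setU1 => /orP[/eqP-> //|eM ve].
  by rewrite (M_in _ _ eM ve) in vY.
- exists [set v; u]; split; first by rewrite setU11 set22.
  move=> e []; rewrite in_setU1 => /orP[/eqP-> //|eM ue].
  by rewrite (M_in _ _ eM ue) in uY.
- have [e [[eM xe] e_uniq]] := M_cover x xY.
  exists e; split; first by rewrite in_setU1 eM orbT.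
  move=> e' []; rewrite in_setU1 => /orP[/eqP->|e'M xe'].
    by case/set2P=> xE; rewrite -xE xY in vY uY.
  exact: e_uniq.
Qed.

(* The pendant vertex v can only be matched with u. *)
Lemma perfect_matching_pendant Y v u :
  has_perfect_matching arc Y -> v \in Y -> (forall w, w \in Y -> adj arc v w -> w = u) ->
  has_perfect_matching arc (Y :\ v :\ u).
Proof.
move=> [M [M_edges M_cover]] vY v_pendant.
have M_uniq x e e' : x \in Y -> e \in M -> x \in e -> e' \in M -> x \in e' -> e = e'.
  move=> xY eM xe e'M xe'; have [f [_ f_uniq]] := M_cover x xY.
  by rewrite -(f_uniq e) ?(f_uniq e').
have [e0 [[e0M ve0] _]] := M_cover v vY.
have [uY e0E] : u \in Y /\ e0 = [set v; u].
  have [a [b [e0E aY bY ab]]] := M_edges e0 e0M.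
  move: ve0; rewrite e0E => /set2P[va|vb].
    have bu : b = u by apply: v_pendant; rewrite // va.
    by rewrite -bu -va.
  have au : a = u by apply: v_pendant; rewrite // vb adj_sym.
  by rewrite -au -vb setUC.
have other_edges e x : e \in M -> e != e0 -> x \in e -> (x != v) && (x != u).
  move=> eM ee0 xe; apply/andP; split; apply: contraNneq ee0 => xE; apply/eqP.
    by apply: (M_uniq v) => //; rewrite -xE.
  by apply: (M_uniq u) => //; rewrite ?e0E ?set22 // -xE.
exists (M :\ e0); split.
  move=> e; rewrite in_setD1 => /andP[ee0 eM].
  have [a [b [eE aY bY ab]]] := M_edges e eM.
  exists a, b; split=> //; rewrite !in_setD1 ?aY ?bY andbT andbC.
    by apply: other_edges ee0 _; rewrite // eE set21.
  by apply: other_edges ee0 _; rewrite // eE set22.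
move=> x; rewrite !in_setD1 => /and3P[xu xv xY].
have [e [[eM xe] e_uniq]] := M_cover x xY.
have ee0 : e != e0.
  apply: contraNneq xu => ee0; move: xe; rewrite ee0 e0E => /set2P[xE|->//].
  by rewrite xE eqxx in xv.
exists e; split; first by rewrite in_setD1 ee0.
by move=> e' []; rewrite in_setD1 => /andP[_ e'M] xe'; apply: e_uniq.
Qed.

Lemma delta_reach_perfect_matching A B (X : {set 'I_n}) :
  delta_reach arc A B -> X \subset B ->
  has_perfect_matching arc (A :\: X) <-> has_perfect_matching arc (B :\: X).
Proof.
elim=> // A' B' C' [v [u [vA uA vu v_pendant B'E]]] reachC IH sXC.
apply: iff_trans (IH sXC); have sXB := subset_trans sXC (delta_reach_subset reachC).
have vX : v \notin X by apply: contra (subsetP sXB v) _; rewrite B'E !inE eqxx andbF.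
have uX : u \notin X by apply: contra (subsetP sXB u) _; rewrite B'E !inE eqxx.
have B'XE : B' :\: X = (A' :\: X) :\ v :\ u.
  by apply/setP=> x; rewrite B'E !inE; case: (x \in X); rewrite ?andbF.
split=> [pmA|pmB].
  rewrite B'XE; apply: perfect_matching_pendant pmA _ _; first by rewrite inE vX.
  by move=> w /setDP[wA _]; apply: v_pendant.
have -> : A' :\: X = v |: (u |: (B' :\: X)).
  apply/setP=> x; rewrite B'E !inE.
  case: (x =P v) => [->|_]; first by rewrite vA (negbTE vX).
  by case: (x =P u) => [->|]; rewrite ?uA ?(negbTE uX).
by apply: perfect_matchingU2; rewrite // B'E !inE eqxx ?andbF.
Qed.

Definition min_degree2 (A : {set 'I_n}) : Prop :=
  forall x, x \in A ->
    exists w1 w2, [/\ w1 \in A, w2 \in A, w1 != w2, adj arc x w1 & adj arc x w2].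

Lemma det_terminal_min_degree2 B :
  delta_terminal B -> \det (skew_adj_on arc B) != 0 ->
  min_degree2 B.
Proof.
move=> terminal detB x xB.
case: (pickP [pred u | (u \in B) && adj arc x u]) => [u /andP[uB xu]|isolated]; last first.
  move: detB; rewrite (det_skew_adj_on_isolated xB) ?eqxx // => y yB.
  by have := isolated y; rewrite /= yB /= => ->.
case: (pickP [pred w | [&& w \in B, adj arc x w & w != u]]) => [w /and3P[wB xw wu]|pendant].
  by exists u, w; rewrite eq_sym.
case/negP: terminal; apply/existsP; exists x; apply/existsP; exists u.
apply/and4P; split=> //; apply/forall_inP=> w wB; apply/implyP=> xw.
by apply: contraFT (pendant w) => wu; rewrite /= wB xw.
Qed.

End DeltaTransformation.

Lemma periodic_modn T (k : nat) (f : nat -> T) :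
  (forall m, f (m + k)%N = f m) -> forall m, f (m %% k)%N = f m.
Proof.
move=> f_periodic m; rewrite [in RHS](divn_eq m k) addnC.
by elim: (m %/ k)%N => [|q IH]; rewrite ?addn0 // mulSnr addnA f_periodic.
Qed.

Section PeriodicSigns.
Variables (R : numDomainType) (k : nat) (e : nat -> R).
Hypothesis e_periodic : forall m, e (m + k)%N = e m.
Hypothesis e_sqr : forall m, e m * e m = 1.
Hypothesis k_even : ~~ odd k.

Lemma prod_periodic_shift m : \prod_(i < k) e (m + i)%N = \prod_(i < k) e i.
Proof.
elim: m => [|m <-]; first by apply: eq_bigr => i _.
have [->|k_gt0] := posnP k; first by rewrite !big_ord0.
rewrite -(prednK k_gt0) big_ord_recr big_ord_recl /= addn0 addSnnS prednK //.
by rewrite e_periodic mulrC; congr (_ * _); apply: eq_bigr => i _; rewrite addSnnS.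
Qed.

(* A kernel vector of the skew-adjacency matrix of a cycle with arc signs
   e 0, e 1, ... satisfies this recurrence around the cycle. *)
Definition sign_recurrence (f : nat -> R) := forall m, f m * e m = f (m + 2)%N * e m.+1.

Lemma sign_recurrence_iter f m j :
  sign_recurrence f -> f (m + j.*2)%N = f m * \prod_(i < j.*2) e (m + i)%N.
Proof.
move=> f_rec; elim: j => [|j IH]; first by rewrite big_ord0 addn0 mulr1.
have f2 l : f (l + 2)%N = f l * e l * e l.+1 by rewrite f_rec -mulrA e_sqr mulr1.
by rewrite doubleS !big_ord_recr /= -addn2 addnA f2 IH !mulrA addnS.
Qed.

Lemma sign_recurrence_eq0 f :
  \prod_(i < k) e i = -1 -> (forall m, f (m + k)%N = f m) -> sign_recurrence f ->
  forall m, f m = 0.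
Proof.
move=> prod_e f_periodic f_rec m.
have kE : k = (k./2).*2 by rewrite -[LHS]odd_double_half (negbTE k_even).
have := sign_recurrence_iter m k./2 f_rec.
by rewrite -kE f_periodic prod_periodic_shift prod_e mulrN1 => /eqP; rewrite eq_sym eqNr => /eqP.
Qed.

Definition even_prefix_prod m := if odd m then 0 else \prod_(i < m) e i.

Lemma even_prefix_prod_recurrence : sign_recurrence even_prefix_prod.
Proof.
move=> m; rewrite /even_prefix_prod addn2 /= negbK.
by case: (odd m); rewrite ?mul0r // !big_ord_recr /= -!mulrA e_sqr mulr1.
Qed.

Lemma even_prefix_prod_periodic m :
  \prod_(i < k) e i = 1 -> even_prefix_prod (m + k)%N = even_prefix_prod m.
Proof.
move=> prod_e; rewrite /even_prefix_prod oddD (negbTE k_even) addbF.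
case: (odd m) => //; rewrite big_split_ord /=.
by rewrite (eq_bigr (fun i : 'I_k => e (m + i)%N)) // prod_periodic_shift prod_e mulr1.
Qed.

End PeriodicSigns.

Section CyclicIndexing.
Variables (T : eqType) (c : seq T) (x0 : T).
Hypotheses (c_uniq : uniq c) (size_gt0 : (0 < size c)%N).

Definition cyc_nth m := nth x0 c (m %% size c).

Lemma mem_cyc_nth m : cyc_nth m \in c.
Proof. by rewrite mem_nth // ltn_mod. Qed.

Lemma cyc_nth_periodic m : cyc_nth (m + size c) = cyc_nth m.
Proof. by rewrite /cyc_nth modnDr. Qed.

Lemma index_cyc_nth m : index (cyc_nth m) c = (m %% size c)%N.
Proof. by rewrite index_uniq // ltn_mod. Qed.

Lemma cyc_nth_index x : x \in c -> cyc_nth (index x c) = x.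
Proof. by move=> xc; rewrite /cyc_nth modn_small ?index_mem // nth_index. Qed.

Lemma eq_cyc_nth i j : (cyc_nth i == cyc_nth j) = (i == j %[mod size c]).
Proof. by rewrite nth_uniq ?ltn_mod. Qed.

Lemma cyc_nth_shift_neq m d : (0 < d < size c)%N -> cyc_nth (m + d) != cyc_nth m.
Proof.
case/andP=> d_gt0 d_lt; rewrite eq_cyc_nth -[m in _ == m %[mod _]]addn0 eqn_modDl.
by rewrite mod0n modn_small // -lt0n.
Qed.

Lemma next_cyc_nth m : next c (cyc_nth m) = cyc_nth m.+1.
Proof.
rewrite next_nth mem_cyc_nth index_cyc_nth /cyc_nth -[m.+1]addn1 -modnDml addn1.
have : (m %% size c < size c)%N by rewrite ltn_mod.
case: c size_gt0 => [//|y p] _; move: (m %% _)%N => r /= r_lt.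
have [r_lt'|] := ltnP r.+1 (size p).+1; first by rewrite modn_small //; apply: set_nth_default.
move=> r_ge; have -> : r = size p by apply/eqP; rewrite eqn_leq -ltnS r_lt -ltnS r_ge.
by rewrite modnn nth_default.
Qed.

Lemma prev_cyc_nth m : prev c (cyc_nth m.+1) = cyc_nth m.
Proof. by rewrite -next_cyc_nth prev_next. Qed.

End CyclicIndexing.

Section CycleNext.
Variables (T : eqType) (c : seq T).
Hypotheses (c_uniq : uniq c) (c_size : (3 <= size c)%N).

Let size_gt0 : (0 < size c)%N. Proof. exact: leq_trans c_size. Qed.

Lemma next_neq x : x \in c -> next c x != x.
Proof.
move=> xc; rewrite -(cyc_nth_index x xc) next_cyc_nth // -addn1.
by apply: cyc_nth_shift_neq => //=; apply: ltnW.
Qed.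

Lemma next_next_neq x : x \in c -> next c (next c x) != x.
Proof.
move=> xc; rewrite -(cyc_nth_index x xc) !next_cyc_nth // -addn2.
exact: cyc_nth_shift_neq.
Qed.

Lemma next_neq_prev x : x \in c -> next c x != prev c x.
Proof. by move=> xc; apply: contra_neq (next_next_neq xc) => ->; rewrite next_prev. Qed.

Lemma next_closed_cycle (B : {pred T}) x :
  x \in c -> x \in B -> (forall y, y \in c -> y \in B -> next c y \in B) -> {subset c <= B}.
Proof.
move=> xc xB B_next y yc.
have iter d : cyc_nth c x (index x c + d) \in B.
  elim: d => [|d IH]; first by rewrite addn0 cyc_nth_index.
  by rewrite addnS -next_cyc_nth // B_next // mem_cyc_nth.
have ix_lt : (index x c < size c)%N by rewrite index_mem.
rewrite -(cyc_nth_index x yc) -cyc_nth_periodic.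
by rewrite -(subnKC (ltnW (leq_trans ix_lt (leq_addl _ _)))) iter.
Qed.

End CycleNext.

Section CycleDeterminant.
Variables (n : nat) (arc : rel 'I_n) (c : seq 'I_n) (x0 : 'I_n).
Hypothesis arc_oriented : oriented_graph arc.
Hypotheses (c_uniq : uniq c) (c_size : (3 <= size c)%N).
Hypothesis adj_c : forall x y, x \in c -> y \in c -> adj arc x y = cycle_edge c x y.

Local Notation S := (skew_adj arc).
Local Notation M := (skew_adj_on arc [set x in c]).
Local Notation w := (cyc_nth c x0).
Let size_gt0 : (0 < size c)%N. Proof. exact: leq_trans c_size. Qed.
Let w_mem := mem_cyc_nth x0 size_gt0.
Let w_next := next_cyc_nth x0 c_uniq size_gt0.
Let w_prev := prev_cyc_nth x0 c_uniq size_gt0.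
Let index_w := index_cyc_nth x0 c_uniq size_gt0.

Definition cycle_sign m := S (w m) (w m.+1).

Lemma cycle_sign_periodic m : cycle_sign (m + size c) = cycle_sign m.
Proof. by rewrite /cycle_sign -addSn !cyc_nth_periodic. Qed.

Lemma cycle_sign_sqr m : cycle_sign m * cycle_sign m = 1.
Proof.
rewrite skew_adj_sqr // -w_next adj_c ?mem_next ?w_mem //.
by rewrite /cycle_edge mem_next w_mem eqxx.
Qed.

Lemma prod_cycle_sign : \prod_(x <- c) S x (next c x) = \prod_(i < size c) cycle_sign i.
Proof.
rewrite (big_nth x0) big_mkord; apply: eq_bigr => i _.
by rewrite -[in LHS](modn_small (ltn_ord i)) -/(cyc_nth c x0 i) w_next.
Qed.

Lemma mul_skew_cycle_out (v : 'rV[rat]_n) j : j \notin c -> (v *m M) 0 j = v 0 j.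
Proof.
move=> jc; rewrite mxE (bigD1 j) //= big1 ?addr0 => [|i ij].
  by rewrite skew_adj_onE inE (negbTE jc) andbF eqxx mulr1.
by rewrite skew_adj_onE !inE (negbTE jc) andbF (negbTE ij) mulr0.
Qed.

Lemma mul_skew_cycle (v : 'rV[rat]_n) m :
  (v *m M) 0 (w m.+1) = v 0 (w m) * cycle_sign m - v 0 (w m.+2) * cycle_sign m.+1.
Proof.
set j := w m.+1; have jc : j \in c := w_mem _.
have prev_j : prev c j = w m := w_prev _.
have next_j : next c j = w m.+2 := w_next _.
rewrite mxE (bigD1 (prev c j)) //= (bigD1 (next c j)) /=; last by rewrite next_neq_prev.
rewrite big1 => [|i /andP[i_prev i_next]].
  rewrite addr0 !skew_adj_onE !inE mem_prev mem_next jc /= prev_j next_j.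
  by rewrite /cycle_sign -/j (skew_adjN _ j (w m.+2)) mulrN.
rewrite skew_adj_onE !inE jc andbT; case ic: (i \in c) => /=; last first.
  by case: eqP => [ij|]; [rewrite ij jc in ic | rewrite mulr0].
rewrite skew_adj0 ?mulr0 // adj_c // /cycle_edge ic jc /=.
apply/norP; split; last exact: i_next.
by apply: contra i_prev => /eqP->; rewrite (prev_next c_uniq).
Qed.

Hypothesis c_even : ~~ odd (size c).

Lemma det_skew_cycle_neq0_oddly : \prod_(i < size c) cycle_sign i = -1 -> \det M != 0.
Proof.
move=> P_1; apply/negP=> /det0P[v /negP v_neq0 vM0]; apply: v_neq0.
have v_cycle m : v 0 (w m) = 0.
  apply: (sign_recurrence_eq0 cycle_sign_periodic cycle_sign_sqr c_even
            (f := fun l => v 0 (w l)) P_1) => [l|l] /=.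
    by rewrite cyc_nth_periodic.
  by apply/eqP; rewrite addn2 -subr_eq0 -mul_skew_cycle vM0 mxE.
apply/eqP/rowP=> j; rewrite mxE; case jc: (j \in c).
  by rewrite -(cyc_nth_index x0 jc) v_cycle.
by rewrite -mul_skew_cycle_out ?jc // vM0 mxE.
Qed.

Lemma det_skew_cycle_eq0_evenly : \prod_(i < size c) cycle_sign i = 1 -> \det M = 0.
Proof.
move=> P1; apply/eqP/det0P; pose g := even_prefix_prod cycle_sign.
have g_mod l : g (l %% size c)%N = g l.
  apply: (@periodic_modn _ _ g) => m.
  exact: (even_prefix_prod_periodic cycle_sign_periodic c_even m P1).
exists (\row_j (if j \in c then g (index j c) else 0)).
  apply/eqP=> /rowP/(_ (w 0)); rewrite !mxE w_mem index_w mod0n.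
  by rewrite /g /even_prefix_prod /= big_ord0; apply/eqP; rewrite oner_eq0.
apply/rowP=> j; rewrite [RHS]mxE; case jc: (j \in c); last first.
  by rewrite mul_skew_cycle_out ?jc // mxE jc.
have -> : j = w (index j c + (size c).-1).+1.
  by rewrite -addnS prednK // cyc_nth_periodic // cyc_nth_index.
rewrite mul_skew_cycle !mxE !w_mem !index_w !g_mod.
by rewrite -addn2 -(even_prefix_prod_recurrence cycle_sign_sqr) subrr.
Qed.

Lemma det_skew_cycle_neq0 : \det M != 0 <-> \prod_(x <- c) S x (next c x) < 0.
Proof.
rewrite prod_cycle_sign; set P := \prod_(i < size c) cycle_sign i.
have : P ^+ 2 == 1 by rewrite expr2 -big_split /=; apply/eqP/big1=> i _; apply: cycle_sign_sqr.
rewrite sqrf_eq1 => /orP[/eqP P1|/eqP P_1].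
  by rewrite P1 ltr10 det_skew_cycle_eq0_evenly // eqxx.
by rewrite P_1 ltrN10 det_skew_cycle_neq0_oddly.
Qed.

End CycleDeterminant.

Lemma cycle_vertex_exists n (arc : rel 'I_n) c : is_cycle arc c -> exists x, x \in c.
Proof. by case: c => [[]//|x c _]; exists x; rewrite mem_head. Qed.

Section UnicyclicStructure.
Variables (n : nat) (arc : rel 'I_n) (c : seq 'I_n).
Hypotheses (arc_oriented : oriented_graph arc) (arc_unicyclic : unicyclic arc).
Hypothesis c_cycle : is_cycle arc c.

Let c_uniq : uniq c. Proof. by case: c_cycle. Qed.
Let c_size : (3 <= size c)%N. Proof. by case: c_cycle. Qed.
Let c_adj : cycle (adj arc) c. Proof. by case: c_cycle. Qed.

Fixpoint cycle_ball k : {set 'I_n} :=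
  if k is k'.+1 then cycle_ball k' :|: [set x | [exists z, (z \in cycle_ball k') && adj arc x z]]
  else [set x in c].

Lemma path_cycle_ball x p :
  path (adj arc) x p -> last x p \in c -> x \in cycle_ball (size p).
Proof.
elim: p x => [|z p IH] x /=; first by rewrite inE.
case/andP=> xz zp last_c; rewrite in_setU inE; apply/orP; right.
by apply/existsP; exists z; rewrite IH.
Qed.

Lemma cycle_ball_exists x : exists k, x \in cycle_ball k.
Proof.
have [y yc] := cycle_vertex_exists c_cycle; case: arc_unicyclic => connected _.
have /connectP[p xp yE] := connected x y.
by exists (size p); apply: path_cycle_ball; rewrite -?yE.
Qed.

Definition cycle_dist x := ex_minn (cycle_ball_exists x).

Lemma cycle_ball_dist x : x \in cycle_ball (cycle_dist x).
Proof. by rewrite /cycle_dist; case: ex_minnP. Qed.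

Lemma cycle_dist_min x k : x \in cycle_ball k -> (cycle_dist x <= k)%N.
Proof. by rewrite /cycle_dist; case: ex_minnP => m _; apply. Qed.

Lemma parent_exists x : x \notin c -> exists z, adj arc x z && (cycle_dist z < cycle_dist x)%N.
Proof.
move=> xc; have := cycle_ball_dist x; have := @cycle_dist_min x.
case: (cycle_dist x) => [|k] dist_min /=; first by rewrite inE (negbTE xc).
rewrite in_setU => /orP[x_ball|]; first by have := dist_min _ x_ball; rewrite ltnn.
by rewrite inE => /existsP[z /andP[z_ball xz]]; exists z; rewrite xz ltnS cycle_dist_min.
Qed.

Definition parent x := odflt x [pick z | adj arc x z && (cycle_dist z < cycle_dist x)%N].

Lemma parentP x : x \notin c -> adj arc x (parent x) /\ (cycle_dist (parent x) < cycle_dist x)%N.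
Proof.
move=> xc; rewrite /parent; case: pickP => [z /andP[]//|no_parent].
by have [z] := parent_exists xc; rewrite no_parent.
Qed.

(* Every vertex is charged with one edge: its successor edge on the cycle, or
   the edge to its parent.  This map is injective, so as the graph has exactly
   n edges, every edge is of one of these two kinds. *)
Definition charged_edge x := if x \in c then [set x; next c x] else [set x; parent x].

Lemma edge_set_adj a b : adj arc a b -> [set a; b] \in edge_set arc.
Proof.
by move=> ab; rewrite inE; apply/existsP; exists a; apply/existsP; exists b; rewrite eqxx.
Qed.

Lemma charged_edge_mem x : charged_edge x \in edge_set arc.
Proof.
rewrite /charged_edge; case: ifP => xc; apply: edge_set_adj; first exact: next_cycle c_adj xc.
by case: (parentP (negbT xc)).
Qed.

Lemma set2_inj (T : finType) (a b x y : T) :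
  a != b -> [set a; b] = [set x; y] -> (a = x /\ b = y) \/ (a = y /\ b = x).
Proof.
move=> ab abE.
have /set2P[aE|aE] : a \in [set x; y] by rewrite -abE set21.
all: have /set2P[bE|bE] : b \in [set x; y] by rewrite -abE set22.
all: subst; rewrite ?eqxx in ab; by [left | right].
Qed.

Lemma charged_edge_inj : injective charged_edge.
Proof.
move=> x y; rewrite /charged_edge.
case xc: (x \in c); case yc: (y \in c) => xyE.
- have x_neq : x != next c x by rewrite eq_sym next_neq.
  have [[]//|[xE yE]] := set2_inj x_neq xyE.
  by have := next_next_neq c_uniq c_size yc; rewrite -xE yE eqxx.
- have : y \in [set x; next c x] by rewrite xyE set21.
  by case/set2P=> yE; move: yc; rewrite yE ?mem_next xc.
- have : x \in [set y; next c y] by rewrite -xyE set21.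
  by case/set2P=> xE; move: xc; rewrite xE ?mem_next yc.
- have [x_par x_dist] := parentP (negbT xc); have [_ y_dist] := parentP (negbT yc).
  have x_neq : x != parent x by apply: contraTneq x_par => <-; apply: adj_irrefl.
  have [[]//|[xE yE]] := set2_inj x_neq xyE.
  by move: x_dist y_dist; rewrite -xE yE => /ltn_trans lt /lt; rewrite ltnn.
Qed.

Lemma charged_edge_onto : charged_edge @: setT = edge_set arc.
Proof.
apply/eqP; rewrite eqEcard; apply/andP; split.
  by apply/subsetP=> e /imsetP[x _ ->]; apply: charged_edge_mem.
rewrite card_imset; last exact: charged_edge_inj.
by case: arc_unicyclic => _ ->; rewrite cardsT card_ord.
Qed.

Lemma adj_cases a b : adj arc a b ->
  [\/ (a \in c) && (b == next c a), (b \in c) && (a == next c b),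
      (a \notin c) && (b == parent a) | (b \notin c) && (a == parent b)].
Proof.
move=> ab; have := edge_set_adj ab; rewrite -charged_edge_onto => /imsetP[x _].
have a_neq : a != b by apply: contraTneq ab => ->; apply: adj_irrefl.
rewrite /charged_edge; case xc: (x \in c) => /(set2_inj a_neq)[[-> ->]|[-> ->]];
  rewrite xc eqxx; by [apply: Or41 | apply: Or42 | apply: Or43 | apply: Or44].
Qed.

Lemma adj_on_cycle x y : x \in c -> y \in c -> adj arc x y = cycle_edge c x y.
Proof.
move=> xc yc; rewrite /cycle_edge xc yc /=; apply/idP/idP.
  case/adj_cases=> /andP[h1 h2]; rewrite ?h2 ?orbT //.
    by rewrite xc in h1.
  by rewrite yc in h1.
case/orP=> /eqP->; first exact: next_cycle c_adj xc.
by rewrite adj_sym; apply: next_cycle c_adj yc.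
Qed.

Lemma min_degree2_cycle (B : {set 'I_n}) x0 :
  x0 \in B -> min_degree2 arc B -> B = [set x in c].
Proof.
move=> x0B deg2.
have sBc : {subset B <= c}.
  move=> x xB; apply/negPn/negP=> xc.
  have xD : x \in B :\: [set x in c] by rewrite !inE xB xc.
  case: (@arg_maxnP _ x [in B :\: [set x in c]] cycle_dist xD) => y.
  rewrite !inE => /andP[yc yB] dist_max.
  have [w1 [w2 [w1B w2B w12 yw1 yw2]]] := deg2 y yB.
  have nbr_parent w : w \in B -> adj arc y w -> w = parent y.
    move=> wB; case/adj_cases=> /andP[h1 /eqP h2].
    - by rewrite h1 in yc.
    - by move: yc; rewrite h2 mem_next h1.
    - exact: h2.
    - have [_] := parentP h1; rewrite -h2 => lt_yw.
      by have := dist_max w; rewrite !inE h1 wB => /(_ isT) /(leq_trans lt_yw); rewrite ltnn.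
  by move: w12; rewrite (nbr_parent _ w1B yw1) (nbr_parent _ w2B yw2) eqxx.
have B_next x : x \in c -> x \in B -> next c x \in B.
  move=> xc xB; have [w1 [w2 [w1B w2B w12 xw1 xw2]]] := deg2 x xB.
  have nbr w : w \in B -> adj arc x w -> (w == next c x) || (x == next c w).
    move=> wB; case/adj_cases=> /andP[h1 h2]; rewrite ?h2 ?orbT //.
      by rewrite xc in h1.
    by rewrite (sBc _ wB) in h1.
  case/orP: (nbr _ w1B xw1) => [/eqP<- //|/eqP x_next1].
  case/orP: (nbr _ w2B xw2) => [/eqP<- //|/eqP x_next2].
  by move: w12; rewrite -(prev_next c_uniq w1) -x_next1 -(prev_next c_uniq w2) -x_next2 eqxx.
apply/setP=> y; rewrite inE; apply/idP/idP; first exact: sBc.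
exact: (next_closed_cycle c_uniq c_size (sBc _ x0B) x0B B_next).
Qed.

End UnicyclicStructure.

Lemma induced_cycle_eq n (arc : rel 'I_n) (c : seq 'I_n) (B : {set 'I_n}) :
  {subset c <= B} -> (forall x y, x \in B -> y \in B -> adj arc x y = cycle_edge c x y) ->
  has_perfect_matching arc (B :\: [set x in c]) -> B = [set x in c].
Proof.
move=> sCB adjB pm.
have BC0 : B :\: [set x in c] = set0.
  apply: perfect_matching_no_edges pm => x y; rewrite !inE => /andP[xc xB] /andP[_ yB].
  by rewrite adjB // /cycle_edge (negbTE xc).
apply/eqP; rewrite eqEsubset -setD_eq0 BC0 eqxx /=.
by apply/subsetP=> x; rewrite inE; apply: sCB.
Qed.

Theorem theorem5p2 (n : nat) (arc : rel 'I_n) (c : seq 'I_n) :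
  oriented_graph arc -> unicyclic arc -> ~~ odd n -> is_cycle arc c ->
  ((\det (skew_adj arc) != 0)%R <->
     (in_U1 arc /\ has_perfect_matching arc [set: 'I_n]) \/
     [/\ in_U2 arc c, oddly_oriented arc c &
         has_perfect_matching arc (~: [set x in c])]).
Proof.
move=> arc_oriented arc_unicyclic _ c_cycle; have [c_uniq c_size _] := c_cycle.
have [x0 _] := cycle_vertex_exists c_cycle.
have adj_c := adj_on_cycle arc_oriented arc_unicyclic c_cycle.
have det_cycle := det_skew_cycle_neq0 x0 arc_oriented c_uniq c_size adj_c.
have pm_reach := delta_reach_perfect_matching arc_oriented.
split=> [det_neq0|].
  have [B reachB terminal] := delta_reach_terminal arc setT.
  have detB : \det (skew_adj_on arc B) != 0.
    by rewrite -(det_delta_reach arc_oriented reachB) skew_adj_onT.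
  have [B0|[y yB]] := set_0Vmem B.
    left; split; first by exists B; split=> // x z; rewrite B0 inE.
    rewrite -[setT]setD0; apply/(pm_reach _ _ _ reachB (sub0set _)).
    by rewrite B0 set0D; apply: perfect_matching0.
  have BC := min_degree2_cycle arc_oriented arc_unicyclic c_cycle yB
               (det_terminal_min_degree2 terminal detB).
  have c_even : ~~ odd (size c).
    by apply: contra detB => odd_c; rewrite BC det_skew_adj_on_odd // cardsE (card_uniqP c_uniq).
  right; split.
  - by exists B; split=> //; rewrite BC; split=> [x|x z]; rewrite !inE //; apply: adj_c.
  - by split=> //; apply/(det_cycle c_even); rewrite -BC.
  - rewrite -setTD; apply/(pm_reach _ _ _ reachB); rewrite BC ?setDv //.
    exact: perfect_matching0.
case=> [[[B [reachB noE]] pm] | [[B [reachB [sCB adjB]]] [c_even prod_neg] pm]];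
  rewrite -skew_adj_onT (det_delta_reach arc_oriented reachB).
  move: pm; rewrite -[setT]setD0 => /(pm_reach _ _ _ reachB (sub0set _)); rewrite setD0.
  by move/(perfect_matching_no_edges noE)->; rewrite skew_adj_on0 det1 oner_eq0.
have sCB' : [set x in c] \subset B by apply/subsetP=> x; rewrite inE; apply: sCB.
move: pm; rewrite -setTD => /(pm_reach _ _ _ reachB sCB') /(induced_cycle_eq sCB adjB)->.
exact/(det_cycle c_even).
Qed.
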